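(* Let $S\ge 2$ and $H\ge S$. Suppose all sending sub-networks use the same family of likelihoods $L(\theta)$, $\theta=1,\ldots,H$, where $L(\theta)$ is the unit-variance Gaussian density with mean $\mathsf{m}_\theta$ and the means $\mathsf{m}_1,\ldots,\mathsf{m}_H$ are distinct; and suppose the true distribution $f^{(s)}$ of sending sub-network $s$ ($s=1,\ldots,S$) is the unit-variance Gaussian with mean $\nu_s\in\{\mathsf{m}_1,\ldots,\mathsf{m}_H\}$, where $\nu_1,\ldots,\nu_S$ are distinct. Let $D=[d_{\theta s}]\in\mathbb{R}^{H\times S}$ with $d_{\theta s}=D[f^{(s)}\|L(\theta)]=\tfrac12(\mathsf{m}_\theta-\nu_s)^2$. Let $k$ be a receiving agent with aggregate weight vector $x_k=[x_{1k},\ldots,x_{Sk}]^\top$, and assume that $\theta\mapsto\sum_{s=1}^S d_{\theta s}x_{sk}$ has a unique minimizer $\theta^\star_k$ over $\{1,\ldots,H\}$. Define $B_k=(\mathbb{1}_He_{\theta^\star_k}^\top-I_H)D$ and $C_k=\begin{bmatrix}B_k\\ \mathbb{1}_S^\top\end{bmatrix}$. Then $\mathrm{rank}(C_k)=2$.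
   Context: Setting: a weakly-connected network in which the agents are partitioned into sending sub-networks $\mathcal{N}_1,\ldots,\mathcal{N}_S$ and receiving sub-networks; the (left-stochastic, nonnegative) combination matrix $A$ has block form $\begin{bmatrix}A_{\mathcal{S}}&A_{\mathcal{S}\mathcal{R}}\\0&A_{\mathcal{R}}\end{bmatrix}$ with $A_{\mathcal{S}}=\mathrm{blockdiag}\{A_{\mathcal{N}_1},\ldots,A_{\mathcal{N}_S}\}$, each sending sub-network strongly connected with Perron vector $p^{(s)}$, each receiving sub-network connected and linked to at least one agent of each sending sub-network. With $E=\mathrm{blockdiag}\{p^{(s)}\mathbb{1}^\top_{N_s}\}$ and $\Omega=[\omega_{\ell k}]=EA_{\mathcal{S}\mathcal{R}}(I-A_{\mathcal{R}})^{-1}$ (the top-right block of $\lim_i A^i$), the aggregate weight from sending sub-network $s$ to receiving agent $k$ is $x_{sk}=\sum_{\ell\in\mathcal{N}_s}\omega_{\ell k}$; these are strictly positive and $\sum_s x_{sk}=1$. Within each sending sub-network all agents share the same true distribution $f^{(s)}$ and likelihoods. $D[f\|g]$ denotes KL divergence, $e_m$ the $m$-th canonical basis vector of $\mathbb{R}^H$, $\mathbb{1}_L$ the all-ones vector. *)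

From mathcomp Require Import all_boot all_order all_algebra.
From mathcomp Require Import reals.
Set Implicit Arguments. Unset Strict Implicit. Unset Printing Implicit Defensive.
Import Order.TTheory GRing.Theory Num.Theory.
Local Open Scope ring_scope.

Definition kl_gauss (R : realType) (nu m : R) : R := (m - nu) ^+ 2 / 2.

Definition Dmat (R : realType) (H S : nat) (m : 'I_H -> R) (nu : 'I_S -> R)
  : 'M[R]_(H, S) := \matrix_(th < H, s < S) kl_gauss (nu s) (m th).

Definition Bmat (R : realType) (H S : nat) (Dm : 'M[R]_(H, S)) (thstar : 'I_H)
  : 'M[R]_(H, S) :=
  ((const_mx 1 : 'cV[R]_H) *m (delta_mx 0 thstar : 'rV[R]_H) - 1%:M) *m Dm.

Definition Cmat (R : realType) (H S : nat) (Dm : 'M[R]_(H, S)) (thstar : 'I_H)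
  : 'M[R]_(H + 1, S) := col_mx (Bmat Dm thstar) (const_mx 1 : 'rV[R]_S).

From mathcomp Require Import all_boot all_order all_algebra.
From mathcomp Require Import reals.
From mathcomp Require Import ring.
Set Implicit Arguments. Unset Strict Implicit. Unset Printing Implicit Defensive.
Import Order.TTheory GRing.Theory Num.Theory.
Local Open Scope ring_scope.

(* Expanding d_{theta s} = m_theta^2/2 - m_theta nu_s + nu_s^2/2, the row theta
   of B_k = D_{theta*} - D_theta is a combination of the all-ones row and of the
   row nu = [nu_s]_s, with coefficient m_theta - m_{theta*} on nu. Any theta
   other than theta* thus lets one recover nu, so C_k has the row space of
   [1; nu], which has rank 2 because nu has two distinct entries. In
   particular, neither the weights x_k nor the minimality of theta* play any
   role: the rank is 2 for every choice of theta*. *)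

Lemma row_Bmat_Dmat (R : realType) (H S : nat) (m : 'I_H -> R) (nu : 'I_S -> R)
    (t i : 'I_H) :
  row i (Bmat (Dmat m nu) t)
  = ((m t ^+ 2 - m i ^+ 2) / 2) *: const_mx 1 + (m i - m t) *: \row_s nu s.
Proof.
apply/rowP => s; rewrite /Bmat mulmxBl -mulmxA -rowE mul1mx !mxE big_ord1.
by rewrite !mxE /kl_gauss; field.
Qed.

Lemma eqmx_Cmat_Dmat (R : realType) (H S : nat) (m : 'I_H -> R)
    (nu : 'I_S -> R) (t th : 'I_H) :
  m th != m t ->
  (Cmat (Dmat m nu) t == col_mx (const_mx 1 : 'rV_S) (\row_s nu s))%MS.
Proof.
move=> m_neq; set c := const_mx 1; set n := \row_s nu s.
have /andP[cV nV] : (c <= col_mx c n)%MS && (n <= col_mx c n)%MS.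
  by rewrite -col_mx_sub.
have /andP[BC cC] : (Bmat (Dmat m nu) t <= Cmat (Dmat m nu) t)%MS
                    && (c <= Cmat (Dmat m nu) t)%MS by rewrite -col_mx_sub.
apply/andP; split; rewrite /Cmat col_mx_sub ?cV ?andbT.
  by apply/row_subP => i; rewrite row_Bmat_Dmat addmx_sub ?scalemx_sub.
rewrite -/(Cmat (Dmat m nu) t) cC /=.
have dm_neq0 : m th - m t != 0 by rewrite subr_eq0.
have -> : n = (m th - m t)^-1 *: row th (Bmat (Dmat m nu) t)
              + ((m t + m th) / 2) *: c.
  by apply/rowP => s; rewrite row_Bmat_Dmat !mxE; field.
by rewrite addmx_sub ?scalemx_sub // (submx_trans (row_sub _ _) BC).
Qed.

Lemma rank_col_mx_const1 (F : fieldType) (n : nat) (v : 'rV[F]_n) (i j : 'I_n) :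
  v 0 i != v 0 j -> \rank (col_mx (const_mx 1 : 'rV_n) v) = 2%N.
Proof.
move=> v_neq; set c : 'rV[F]_n := const_mx 1.
have rank_c : \rank c = 1%N.
  suff c_neq0 : c != 0 by rewrite rank_rV c_neq0.
  by apply/eqP => /rowP /(_ i) /eqP; rewrite !mxE oner_eq0.
apply/eqP; rewrite eqn_leq rank_leq_row /=.
suff : (\rank c < \rank (col_mx c v))%N by rewrite rank_c.
have /andP[cV _] : (c <= col_mx c v)%MS && (v <= col_mx c v)%MS by rewrite -col_mx_sub.
apply: rank_ltmx; rewrite ltmxE cV col_mx_sub submx_refl /=.
by apply/negP => /sub_rVP [a v_eq]; move: v_neq; rewrite v_eq !mxE eqxx.
Qed.

Theorem theorem2 (R : realType) (S H : nat)
  (hS : (2 <= S)%N) (hH : (S <= H)%N)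
  (m : 'I_H -> R) (m_inj : injective m)
  (nu : 'I_S -> R) (nu_inj : injective nu)
  (nu_in : forall s, exists th, nu s = m th)
  (x : 'I_S -> R) (x_pos : forall s, 0 < x s) (x_sum : \sum_(s < S) x s = 1)
  (thstar : 'I_H)
  (thstar_unique_min : forall th : 'I_H, th != thstar ->
     \sum_(s < S) (Dmat m nu) thstar s * x s < \sum_(s < S) (Dmat m nu) th s * x s) :
  \rank (Cmat (Dmat m nu) thstar) = 2%N.
Proof.
have H_gt1 : (1 < H)%N := leq_trans hS hH.
have [th th_neq] : exists th : 'I_H, th != thstar.
  pose th0 : 'I_H := Ordinal (ltnW H_gt1); pose th1 : 'I_H := Ordinal H_gt1.
  by have [->|] := eqVneq thstar th0; [exists th1 | exists th0; rewrite eq_sym].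
have m_neq : m th != m thstar by apply: contra th_neq => /eqP /m_inj ->.
rewrite (eqmx_rank (eqmx_Cmat_Dmat nu m_neq)).
apply: (@rank_col_mx_const1 _ _ _ (Ordinal (ltnW hS)) (Ordinal hS)).
by rewrite !mxE; apply/eqP => /nu_inj /(congr1 val).
Qed.
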